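(* Assume the setting described in the context and suppose that for some $\gamma>1/2$, $\sum_i\lambda_i^{2\gamma-2\delta}<\infty$. Then almost surely, for every $s\in[0,1)$, the map $t\mapsto\Big(E\mapsto\int_s^tAS(t-r)E(\omega(r)-\omega(s))\,dr\Big)$ defines an element of $C_\gamma([s,1];L_2(L_2(V,V_\delta),V))$, and its $\gamma$-Hölder seminorm is bounded independently of $s\in[0,1]$.
   Context: $V$ is a separable real Hilbert space; $A$ is linear with $-A$ positive self-adjoint with compact inverse, orthonormal eigenbasis $(e_i)$, $-Ae_i=\lambda_ie_i$, $\lambda_i>0$, generating the analytic semigroup $S(t)$; $V_\delta=D((-A)^\delta)$ with $|x|_{V_\delta}=|(-A)^\delta x|$, $\delta\in[0,1]$, $\sum_i\lambda_i^{-2\delta}<\infty$; $\beta'\in(1/3,1/2)$. $L_2(X,Y)$ denotes Hilbert–Schmidt operators; $C_\gamma([s,1];X)$ is the space of $\gamma$-Hölder continuous $X$-valued functions. $Q$ is a positive symmetric trace-class operator on $V$ with $Qe_i=q_ie_i$, $q_i>0$, $\sum q_i<\infty$; $\omega$ is a $Q$-Wiener process on $[0,1]$ in $V$, in a version with $\gamma'$-Hölder paths for all $\gamma'<1/2$. *)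

(* V is represented in coordinates w.r.t. the
   orthonormal eigenbasis (e_i) of A, i.e. V ~ l^2(nat). *)
From HB Require Import structures.
From mathcomp Require Import all_boot all_order all_algebra.
From mathcomp Require Import all_classical all_reals all_analysis.
Set Implicit Arguments. Unset Strict Implicit. Unset Printing Implicit Defensive.
Import Order.TTheory GRing.Theory Num.Theory.
Import numFieldNormedType.Exports.
Local Open Scope classical_set_scope.
Local Open Scope ring_scope.

(* Centered Gaussian linear combinations: for a finite family of
   (coefficient a, coordinate index i, time t), Y = sum a * w_i(t) has
   characteristic function exp(-Var/2) with the covariance
   E[w_i(t) w_j(u)] = [i = j] q_i min(t,u).  This is exactly the law
   of a Q-Wiener process omega(t) = sum_i w_i(t) e_i with Q e_i = q_i e_i. *)
Definition QWiener {R : realType} {d : measure_display} {Omega : measurableType d}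
  (P : probability Omega R) (q : nat -> R) (w : nat -> R -> Omega -> R) : Prop :=
  (forall k t, 0 <= t <= 1 -> measurable_fun setT (w k t)) /\
  (forall c : seq (R * nat * R),
     all (fun p => 0 <= p.2 <= 1) c ->
     let Y := fun x => \sum_(p <- c) p.1.1 * w p.1.2 p.2 x in
     let v := \sum_(p <- c) \sum_(p' <- c)
                (p.1.1 * p'.1.1 *
                 (if p.1.2 == p'.1.2 then q p.1.2 * Num.min p.2 p'.2 else 0)) in
     (\int[P]_x (cos (Y x))%:E = (expR (- (v / 2)))%:E)%E /\
     (\int[P]_x (sin (Y x))%:E = 0)%E).

Definition holder_paths {R : realType} {Omega : Type}
  (w : nat -> R -> Omega -> R) : Prop :=
  forall x,
    (forall t, 0 <= t <= 1 -> (\sum_(k <oo) ((w k t x) ^+ 2)%:E < +oo)%E) /\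
    (forall g', 0 < g' < 2^-1 -> exists C : R, forall t u,
        0 <= t <= 1 -> 0 <= u <= 1 ->
        (\sum_(k <oo) ((w k t x - w k u x) ^+ 2)%:E
           <= (C ^+ 2 * `|t - u| `^ (2 * g'))%:E)%E).

(* The V-coordinate j of  int_s^t A S(t-r) E (omega(r)-omega(s)) dr  for
   E = e_j (x) e_k  (E y = <y,e_k> e_j), using A S(t-r) e_j = -l_j e^{-l_j (t-r)} e_j.
   For this E only coordinate j is nonzero. *)
Definition conv_coef {R : realType} {Omega : Type} (lam : nat -> R)
  (w : nat -> R -> Omega -> R) (x : Omega) (s t : R) (j k : nat) : R :=
  Rintegral lebesgue_measure `[s, t]
    (fun r => - lam j * expR (- (lam j * (t - r))) * (w k r x - w k s x)).

(* Squared Hilbert--Schmidt norm in L_2(L_2(V,V_delta),V) of T_t - T_u, where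
   T_t : E |-> int_s^t A S(t-r) E (omega(r)-omega(s)) dr.  It is computed on the
   orthonormal basis  (lam_j^{-delta} e_j (x) e_k)_{j,k}  of L_2(V,V_delta). *)
Definition HS_sq_diff {R : realType} {Omega : Type} (lam : nat -> R) (delta : R)
  (w : nat -> R -> Omega -> R) (x : Omega) (s t u : R) : \bar R :=
  (\sum_(j <oo) \sum_(k <oo)
     ((lam j `^ (- delta) * (conv_coef lam w x s t j k - conv_coef lam w x s u j k))
        ^+ 2)%:E)%E.

(* The estimate is pathwise: only the Hoelder regularity of every path is used,
   never the Gaussian law of the Q-Wiener process.  Fix a path, a start time s
   and write g_k(r) = w_k(r) - w_k(s); these are continuous on [s, 1] with
   sum_k g_k(r)^2 <= M uniformly in r.  For a fixed eigenvalue l = lam_j let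
   d_k be the increment between t <= u of the k-th convolution coefficient.
   Then sum_k d_k^2 = int K(r) (sum_k d_k g_k(r)) dr for a kernel K of total
   mass 2 (1 - e^{-l (u - t)}), and bounding sum_k d_k g_k(r) by AM-GM with a
   free weight yields sum_k d_k^2 <= 4 M (1 - e^{-l (u - t)})^2, which is at
   most 4 M l^(2 gamma) |u - t|^(2 gamma) as long as gamma <= 1.  Weighting by
   lam_j^(-2 delta) and summing over j gives the Hoelder bound.  Finally
   gamma <= 1 is automatic: since lam_j -> +oo, the series of lam_j^p diverges
   for p >= 0, so the summability hypothesis forces gamma < delta <= 1. *)
From HB Require Import structures.
From mathcomp Require Import all_boot all_order all_algebra.
From mathcomp Require Import all_classical all_reals all_analysis.
From mathcomp Require Import lra ring.
Import Order.TTheory GRing.Theory Num.Theory.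
Import numFieldNormedType.Exports.
Local Open Scope classical_set_scope.
Local Open Scope ring_scope.

Section real_inequalities.
Context {R : realType}.

Lemma ler_mul_amgm (a b c : R) : 0 < c -> a * b <= a ^+ 2 / (2 * c) + c * b ^+ 2 / 2.
Proof.
move=> c0; rewrite -subr_ge0.
have -> : a ^+ 2 / (2 * c) + c * b ^+ 2 / 2 - a * b = (a - c * b) ^+ 2 / (2 * c).
  by field; rewrite gt_eqF.
by rewrite divr_ge0 ?sqr_ge0 // mulr_ge0 // ltW.
Qed.

(* Choosing the weight c = L turns the family of bounds into S <= S/2 + M L^2/2. *)
Lemma amgm_self_bound (S M L : R) : 0 <= S -> 0 <= L ->
  (forall c, 0 < c -> S <= (S / (2 * c) + c * M / 2) * L) -> S <= M * L ^+ 2.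
Proof.
move=> S0 L0 H; have [Lp|] := ltrP 0 L.
  have := H L Lp.
  have -> : (S / (2 * L) + L * M / 2) * L = S / 2 + M * L ^+ 2 / 2.
    by field; rewrite gt_eqF.
  lra.
move=> Lle0; have L00 : L = 0 by apply/eqP; rewrite eq_le Lle0 L0.
by have := H 1 ltr01; rewrite L00 !mulr0 expr0n /= mulr0.
Qed.

Lemma onemexpR_le_powR (y g : R) : 0 <= y -> 0 < g -> g <= 1 ->
  1 - expR (- y) <= y `^ g.
Proof.
move=> y0 g0 g1; have [y1|y1] := ltrP y 1.
  have h1 : 1 - expR (- y) <= y by have := expR_ge1Dx (- y); lra.
  apply: le_trans h1 _.
  have [->|yn0] := eqVneq y 0; first by rewrite powR0 ?gt_eqF.
  by apply: ger1_powR => //; rewrite ltW // lt_neqAle eq_sym yn0 y0.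
apply: (@le_trans _ _ 1); first by rewrite lerBlDr lerDl expR_ge0.
by rewrite -[X in X <= _](powRr0 y); apply: ler_powR => //; exact: ltW.
Qed.

Lemma sqr_powR (a p : R) : 0 < a -> (a `^ p) ^+ 2 = a `^ (2 * p).
Proof.
move=> a0; rewrite expr2 -powRD; last by apply/implyP => _; rewrite gt_eqF.
by congr powR; ring.
Qed.

Lemma sum_le_nneseries (u : nat -> R) N : (forall n, 0 <= u n) ->
  ((\sum_(k < N) u k)%:E <= \sum_(i <oo) (u i)%:E)%E.
Proof.
move=> u0; rewrite -sumEFin -(big_mkord xpredT (fun k => (u k)%:E)).
by apply: nneseries_lim_ge => n _ _; rewrite lee_fin.
Qed.

Lemma nneseries_le_of_sum_le (u : nat -> \bar R) (B : \bar R) :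
  (forall n, (0 <= u n)%E) ->
  (forall N, (\sum_(0 <= i < N) u i <= B)%E) -> (\sum_(i <oo) u i <= B)%E.
Proof.
move=> u0 hN; apply: lime_le; last exact: nearW.
by apply: is_cvg_nneseries => n _ _; exact: u0.
Qed.

Lemma powR_series_divergent (lam : nat -> R) (p : R) :
  lam @ \oo --> +oo -> 0 <= p -> ~ (\sum_(i <oo) (lam i `^ p)%:E < +oo)%E.
Proof.
move=> /cvgryPge /(_ 1) [N _ lam1] p0 hs.
have s0 : (0 <= \sum_(i <oo) (lam i `^ p)%:E)%E.
  by apply: nneseries_ge0 => n _ _; rewrite lee_fin powR_ge0.
set X := fine (\sum_(i <oo) (lam i `^ p)%:E).
have hX := archi_boundP (fine_ge0 s0 : 0 <= X).
set K := Num.Def.archi_bound X in hX.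
have := @sum_le_nneseries (fun i => lam i `^ p) (N + K) (fun n => powR_ge0 _ _).
rewrite -(fineK (x := \sum_(i <oo) (lam i `^ p)%:E)) ?ge0_fin_numE //.
rewrite lee_fin -/X => hle.
suff : K%:R <= \sum_(k < N + K) lam k `^ p by lra.
rewrite -(big_mkord xpredT (fun k => lam k `^ p)).
rewrite (big_cat_nat (n := N)) //= ?leq_addr //.
apply: (@le_trans _ _ (0 + \sum_(N <= k < N + K) 1)).
  by rewrite add0r sumr_const_nat addnC addnK.
apply: lerD; first by apply: sumr_ge0 => k _; exact: powR_ge0.
apply: ler_sum_nat => k /andP[Nk _].
by rewrite -(powRr0 (lam k)); apply: ler_powR => //; exact: lam1.
Qed.

End real_inequalities.

Section continuity_on_segments.
Context {R : realType}.
Notation mu := (@lebesgue_measure R).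
Implicit Types (A : set R) (f g : R -> R).

Lemma within_continuousM A f g : {within A, continuous f} ->
  {within A, continuous g} -> {within A, continuous (fun x => f x * g x)}.
Proof.
move=> /subspace_continuousP cf /subspace_continuousP cg.
by apply/subspace_continuousP => x Ax; apply: cvgM; [exact: cf|exact: cg].
Qed.

Lemma within_continuousD A f g : {within A, continuous f} ->
  {within A, continuous g} -> {within A, continuous (fun x => f x + g x)}.
Proof.
move=> /subspace_continuousP cf /subspace_continuousP cg.
by apply/subspace_continuousP => x Ax; apply: cvgD; [exact: cf|exact: cg].
Qed.

Lemma within_continuousB A f g : {within A, continuous f} ->
  {within A, continuous g} -> {within A, continuous (fun x => f x - g x)}.
Proof.
move=> /subspace_continuousP cf /subspace_continuousP cg.
by apply/subspace_continuousP => x Ax; apply: cvgB; [exact: cf|exact: cg].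
Qed.

Lemma within_continuous_cst A (c : R) : {within A, continuous (fun _ : R => c)}.
Proof. by apply: continuous_subspaceT => x; exact: cvg_cst. Qed.

Lemma within_continuous_sum A N (F : nat -> R -> R) :
  (forall k, {within A, continuous (F k)}) ->
  {within A, continuous (fun x => \sum_(k < N) F k x)}.
Proof.
move=> cF; elim: N => [|N IH].
  under [fun x => _]funext do rewrite big_ord0.
  exact: within_continuous_cst.
under [fun x => _]funext do rewrite big_ord_recr /=.
exact: within_continuousD.
Qed.

Lemma within_continuous_sqr_holder f (K a b : R) : 0 <= K ->
  (forall r r', a <= r <= b -> a <= r' <= b ->
     (f r - f r') ^+ 2 <= K * `|r - r'| `^ (2^-1)) ->
  {within `[a, b], continuous f}.
Proof.
move=> K0 H; apply/subspace_continuousP => x xab.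
apply/cvgrPdist_lt => e e0; rewrite near_withinE.
have K1 : 0 < K + 1 by rewrite ltr_pwDr.
set h := e ^+ 2 / (K + 1).
have h0 : 0 < h by rewrite /h divr_gt0 ?exprn_gt0.
apply/nbhs_ballP; exists (h ^+ 2); first exact: exprn_gt0.
move=> t; rewrite /ball /= => xt tab.
have := H x t; rewrite /= !in_itv /= in xab tab => /(_ xab tab).
rewrite powR12_sqrt // => hxt.
have hs : Num.sqrt `|x - t| < h.
  move: xt; rewrite -(@ltr_sqrt _ _ _ (exprn_gt0 2 h0)) sqrtr_sqr.
  by rewrite (ger0_norm (ltW h0)).
have : (f x - f t) ^+ 2 < e ^+ 2.
  apply: (le_lt_trans hxt); apply: (@le_lt_trans _ _ (K * h)).
    by rewrite ler_wpM2l // ltW.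
  rewrite /h mulrA ltr_pdivrMr //; have := exprn_gt0 2 e0; nra.
rewrite -real_normK ?num_real //; have := normr_ge0 (f x - f t); nra.
Qed.

Lemma integrable_within_segment {a b : R} {D : set R} {f : R -> R} :
  {within `[a, b], continuous f} ->
  measurable D -> D `<=` `[a, b] -> mu.-integrable D (EFin \o f).
Proof.
move=> cf mD Dab; apply: (@integrableS _ _ _ mu `[a, b]%classic D) => //.
by apply: continuous_compact_integrable => //; exact: segment_compact.
Qed.

Lemma Rintegral_sum D N (F : nat -> R -> R) : measurable D ->
  (forall k, mu.-integrable D (EFin \o F k)) ->
  \int[mu]_(x in D) (\sum_(k < N) F k x) = \sum_(k < N) \int[mu]_(x in D) F k x.
Proof.
move=> mD iF.
have iS n : mu.-integrable D (EFin \o (fun x => \sum_(k < n) F k x)).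
  elim: n => [|n IH].
    under [fun x => _]funext do rewrite big_ord0.
    have -> : EFin \o (fun=> (0 : R)) = cst 0%E by [].
    exact: integrable0.
  under [fun x => _]funext do rewrite big_ord_recr /=.
  have -> : EFin \o (fun x => \sum_(i < n) F i x + F n x) =
      ((EFin \o (fun x => (\sum_(i < n) F i x)%R)) \+ (EFin \o F n))%E.
    by apply/funext => x; rewrite /= EFinD.
  exact: integrableD.
elim: N => [|N IH].
  under eq_Rintegral do rewrite big_ord0.
  by rewrite big_ord0 Rintegral_cst // mul0r.
under eq_Rintegral do rewrite big_ord_recr /=.
by rewrite (RintegralD mD (iS N) (iF N)) IH big_ord_recr.
Qed.

Lemma Rintegral_mul_sum (a b : R) (D : set R) N (f : R -> R) (c : nat -> R)
    (g : nat -> R -> R) :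
  measurable D -> D `<=` `[a, b] -> {within `[a, b], continuous f} ->
  (forall k, {within `[a, b], continuous (g k)}) ->
  \sum_(k < N) c k * \int[mu]_(r in D) (f r * g k r) =
  \int[mu]_(r in D) (f r * \sum_(k < N) c k * g k r).
Proof.
move=> mD Dab cf cg.
have cfg k : {within `[a, b], continuous (fun r => f r * g k r)}.
  exact: within_continuousM.
transitivity (\sum_(k < N) \int[mu]_(r in D) (c k * (f r * g k r))).
  apply: eq_bigr => k _; rewrite RintegralZl //.
  exact: integrable_within_segment (cfg k) mD Dab.
rewrite -(@Rintegral_sum D N (fun k r => c k * (f r * g k r))) //; last first.
  move=> k; apply: integrable_within_segment mD Dab.
  exact: within_continuousM (within_continuous_cst _ _) (cfg k).
by apply: eq_Rintegral => r _; rewrite mulr_sumr; apply: eq_bigr => k _; rewrite mulrCA.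
Qed.

End continuity_on_segments.

Section exponential_kernel.
Context {R : realType}.
Notation mu := (@lebesgue_measure R).

Lemma is_derive_affine (l T x : R) : is_derive x 1 (fun r : R => - (l * (T - r))) l.
Proof.
have -> : (fun r : R => - (l * (T - r))) = (fun r => l * r - l * T).
  by apply/funext => r; rewrite mulrBr opprB.
by apply: is_derive_eq; rewrite subr0 /GRing.scale /= mulr1.
Qed.

Lemma derivable_expR_affine (l T x : R) :
  derivable (fun r => expR (- (l * (T - r)))) x 1.
Proof.
apply/derivable1_diffP; apply: (@differentiable_comp _ _ _ _ _ expR).
  apply/derivable1_diffP.
  by have := is_derive_affine l T x => /(@ex_derive _ _ _ _ _ _).
by apply/derivable1_diffP.
Qed.

Lemma derive1_expR_affine (l T x : R) :
  (fun r => expR (- (l * (T - r))))^`()%classic x = l * expR (- (l * (T - x))).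
Proof.
have hf : derivable (fun r : R => - (l * (T - r))) x 1.
  by have := is_derive_affine l T x => /(@ex_derive _ _ _ _ _ _).
have -> : (fun r => expR (- (l * (T - r)))) =
    expR \o (fun r : R => - (l * (T - r))) by [].
rewrite derive1_comp //.
have h1 := is_derive_affine l T x; have h2 := is_derive_expR (- (l * (T - x))).
by rewrite !derive1E !derive_val mulrC.
Qed.

Lemma continuous_expR_affine (l T : R) :
  continuous (fun r => expR (- (l * (T - r)))).
Proof.
move=> x; apply: differentiable_continuous; apply/derivable1_diffP.
exact: derivable_expR_affine.
Qed.

Lemma within_continuous_expR_affine (A : set R) (l T : R) :
  {within A, continuous (fun r => l * expR (- (l * (T - r))))}.
Proof.
apply: continuous_subspaceT => x.
by apply: cvgM; [exact: cvg_cst | exact: continuous_expR_affine].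
Qed.

Lemma Rintegral_expR_affine (l T a b : R) : a <= b ->
  \int[mu]_(r in `[a, b]) (l * expR (- (l * (T - r)))) =
  expR (- (l * (T - b))) - expR (- (l * (T - a))).
Proof.
rewrite le_eqVlt => /predU1P[<-|ab].
  by rewrite set_itv1 Rintegral_set1 subrr.
have cF := continuous_expR_affine l T.
rewrite /Rintegral (@continuous_FTC2 _ _ (fun r => expR (- (l * (T - r))))) //.
- exact: within_continuous_expR_affine.
- split; first by move=> x _; exact: derivable_expR_affine.
  + exact: cvg_at_right_filter (cF a).
  + exact: cvg_at_left_filter (cF b).
- by move=> x _; exact: derive1_expR_affine.
Qed.

Definition kernel (l T r : R) := - l * expR (- (l * (T - r))).

Lemma continuous_kernel (l T : R) : continuous (kernel l T).
Proof.
by move=> x; apply: cvgM; [exact: cvg_cst | exact: continuous_expR_affine].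
Qed.

Lemma normr_kernel (l T r : R) : 0 <= l ->
  `|kernel l T r| = l * expR (- (l * (T - r))).
Proof. by move=> l0; rewrite /kernel normrM normrN !ger0_norm ?expR_ge0. Qed.

Lemma kernelB (l t u r : R) : kernel l u r - kernel l t r =
  (1 - expR (- (l * (u - t)))) * (l * expR (- (l * (t - r)))).
Proof.
rewrite /kernel.
have -> : expR (- (l * (u - r))) = expR (- (l * (u - t))) * expR (- (l * (t - r))).
  by rewrite -expRD; congr expR; ring.
ring.
Qed.

Lemma Rintegral_kernel_mul_le {l a b B : R} {G : R -> R} : 0 <= l -> a <= b ->
  {within `[a, b], continuous G} -> (forall r, a < r <= b -> `|G r| <= B) ->
  \int[mu]_(r in `]a, b]) (kernel l b r * G r) <= B * (1 - expR (- (l * (b - a)))).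
Proof.
move=> l0 ab cG GB.
have ab_sub : `]a, b] `<=` `[a, b] by apply: subset_itvr; rewrite bnd_simp.
have cE := within_continuous_expR_affine `[a, b] l b.
have cK : {within `[a, b], continuous (kernel l b)}.
  exact: continuous_subspaceT (continuous_kernel l b).
apply: (@le_trans _ _ (\int[mu]_(r in `]a, b]) (l * expR (- (l * (b - r))) * B))).
  apply: le_Rintegral => //.
  - apply: (integrable_within_segment _ _ ab_sub) => //.
    exact: within_continuousM cK cG.
  - apply: (integrable_within_segment _ _ ab_sub) => //.
    exact: within_continuousM cE (within_continuous_cst _ _).
  - move=> r; rewrite /= in_itv /= => rab.
    apply: le_trans (ler_norm _) _; rewrite normrM normr_kernel //.
    by apply: ler_wpM2l; [rewrite mulr_ge0 ?expR_ge0 | exact: GB].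
rewrite RintegralZr //; last exact: (integrable_within_segment cE _ ab_sub).
rewrite Rintegral_itv_obnd_cbnd; last exact: (integrable_within_segment cE _ ab_sub).
by rewrite Rintegral_expR_affine // subrr mulr0 oppr0 expR0 mulrC.
Qed.

Lemma Rintegral_kernelB_mul_le {l a t u B : R} {G : R -> R} : 0 <= l ->
  a <= t -> t <= u ->
  {within `[a, t], continuous G} -> (forall r, a <= r <= t -> `|G r| <= B) ->
  \int[mu]_(r in `[a, t]) ((kernel l u r - kernel l t r) * G r) <=
    B * (1 - expR (- (l * (u - t)))).
Proof.
move=> l0 le_at le_tu cG GB.
set e := expR (- (l * (u - t))).
have e1 : 0 <= 1 - e.
  by rewrite subr_ge0 /e expR_le1 oppr_le0 mulr_ge0 ?subr_ge0.
have cE := within_continuous_expR_affine `[a, t] l t.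
have cK : {within `[a, t],
    continuous (fun r => (1 - e) * (l * expR (- (l * (t - r)))))}.
  exact: within_continuousM (within_continuous_cst _ _) cE.
under eq_Rintegral do rewrite kernelB -/e.
apply: (@le_trans _ _
    (\int[mu]_(r in `[a, t]) ((1 - e) * (l * expR (- (l * (t - r)))) * B))).
  apply: le_Rintegral => //.
  - apply: (integrable_within_segment _ _ (@subset_refl _ `[a, t])) => //.
    exact: within_continuousM cK cG.
  - apply: (integrable_within_segment _ _ (@subset_refl _ `[a, t])) => //.
    exact: within_continuousM cK (within_continuous_cst _ _).
  - move=> r; rewrite /= in_itv /= => rat.
    apply: le_trans (ler_norm _) _; rewrite normrM ger0_norm; last first.
      by rewrite mulr_ge0 // mulr_ge0 ?expR_ge0.
    by apply: ler_wpM2l; [rewrite mulr_ge0 // mulr_ge0 ?expR_ge0 | exact: GB].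
rewrite RintegralZr //; last by apply: (integrable_within_segment cK).
rewrite RintegralZl //; last by apply: (integrable_within_segment cE).
have B0 : 0 <= B by apply: le_trans (GB t _); rewrite ?normr_ge0 ?le_at ?lexx.
rewrite Rintegral_expR_affine // subrr mulr0 oppr0 expR0.
rewrite [leRHS]mulrC -mulrA ler_wpM2l // -[leRHS]mul1r.
by rewrite ler_wpM2r // lerBlDr lerDl expR_ge0.
Qed.

End exponential_kernel.

Section convolution_increments.
Context {R : realType}.
Notation mu := (@lebesgue_measure R).
Variables (W : nat -> R -> R) (s M : R).
Hypothesis sum_sqr_increment_le : forall N r, s <= r <= 1 ->
  \sum_(k < N) (W k r - W k s) ^+ 2 <= M.
Hypothesis W_continuous : forall k, {within `[s, 1], continuous (W k)}.

Definition conv (l T : R) (k : nat) :=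
  \int[mu]_(r in `[s, T]) (kernel l T r * (W k r - W k s)).

Lemma within_continuous_increment k u : u <= 1 ->
  {within `[s, u], continuous (fun r => W k r - W k s)}.
Proof.
move=> u1; apply: within_continuousB (within_continuous_cst _ _).
by apply: continuous_subspaceW (W_continuous k); apply: subset_itvl; rewrite bnd_simp.
Qed.

Lemma convB l t u k : s <= t -> t <= u -> u <= 1 ->
  conv l u k - conv l t k =
  \int[mu]_(r in `]t, u]) (kernel l u r * (W k r - W k s)) +
  \int[mu]_(r in `[s, t]) ((kernel l u r - kernel l t r) * (W k r - W k s)).
Proof.
move=> st tu u1.
have cI T : {within `[s, u], continuous (fun r => kernel l T r * (W k r - W k s))}.
  apply: within_continuousM; last exact: within_continuous_increment.
  exact: continuous_subspaceT (continuous_kernel l T).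
have st_sub : `[s, t] `<=` `[s, u] by apply: subset_itvl; rewrite bnd_simp.
rewrite /conv -(@Rintegral_itvB _ _ (BLeft s) (BRight u) t) ?bnd_simp //; last first.
  exact: integrable_within_segment (cI u) _ (@subset_refl _ _).
under [X in _ = _ + X]eq_Rintegral do rewrite mulrBl.
rewrite RintegralB //; first by lra.
- exact: integrable_within_segment (cI u) _ st_sub.
- exact: integrable_within_segment (cI t) _ st_sub.
Qed.

Lemma sum_sqr_convB l t u N : s <= t -> t <= u -> u <= 1 ->
  let G r := \sum_(k < N) (conv l u k - conv l t k) * (W k r - W k s) in
  \sum_(k < N) (conv l u k - conv l t k) ^+ 2 =
  \int[mu]_(r in `]t, u]) (kernel l u r * G r) +
  \int[mu]_(r in `[s, t]) ((kernel l u r - kernel l t r) * G r).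
Proof.
move=> st tu u1 G.
have st_sub : `[s, t] `<=` `[s, u] by apply: subset_itvl; rewrite bnd_simp.
have tu_sub : `]t, u] `<=` `[s, u] by apply: subset_itvr; rewrite bnd_simp.
have cK T : {within `[s, u], continuous (kernel l T)}.
  exact: continuous_subspaceT (continuous_kernel l T).
transitivity (\sum_(k < N) (conv l u k - conv l t k) * (conv l u k - conv l t k)).
  by apply: eq_bigr => k _; rewrite expr2.
have cincr k : {within `[s, u], continuous (fun r => W k r - W k s)}.
  exact: within_continuous_increment.
under eq_bigr do rewrite [X in _ * X]convB // mulrDr.
rewrite big_split /=; congr (_ + _).
- by apply: (@Rintegral_mul_sum _ s u _ N (kernel l u)
    (fun k => conv l u k - conv l t k) (fun k r => W k r - W k s)).
- apply: (@Rintegral_mul_sum _ s u _ N (fun r => kernel l u r - kernel l t r)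
    (fun k => conv l u k - conv l t k) (fun k r => W k r - W k s)) => //.
  exact: within_continuousB.
Qed.

Lemma norm_sum_mul_increment_le (d : nat -> R) N c r : 0 < c -> s <= r <= 1 ->
  `| \sum_(k < N) d k * (W k r - W k s) | <=
    (\sum_(k < N) d k ^+ 2) / (2 * c) + c * M / 2.
Proof.
move=> c0 sr; apply: le_trans (ler_norm_sum _ _ _) _.
apply: (@le_trans _ _
    (\sum_(k < N) (d k ^+ 2 / (2 * c) + c * (W k r - W k s) ^+ 2 / 2))).
  apply: ler_sum => k _; rewrite normrM.
  have := @ler_mul_amgm _ `|d k| `|W k r - W k s| c c0.
  by rewrite !real_normK ?num_real.
rewrite big_split /= -mulr_suml; apply: lerD => //.
rewrite -mulr_suml -mulr_sumr ler_pM2r // ler_pM2l //.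
exact: sum_sqr_increment_le.
Qed.

Lemma sum_sqr_convB_le_amgm l t u N c : 0 < l -> 0 < c ->
  s <= t -> t <= u -> u <= 1 ->
  \sum_(k < N) (conv l u k - conv l t k) ^+ 2 <=
  ((\sum_(k < N) (conv l u k - conv l t k) ^+ 2) / (2 * c) + c * M / 2) *
    (2 * (1 - expR (- (l * (u - t))))).
Proof.
move=> l0 c0 st tu u1.
set S := \sum_(k < N) _; set B := S / (2 * c) + c * M / 2.
set G := fun r => \sum_(k < N) (conv l u k - conv l t k) * (W k r - W k s).
have -> : S = \int[mu]_(r in `]t, u]) (kernel l u r * G r) +
    \int[mu]_(r in `[s, t]) ((kernel l u r - kernel l t r) * G r).
  exact: sum_sqr_convB.
have cG : {within `[s, u], continuous G}.
  apply: (@within_continuous_sum _ _ N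
    (fun k r => (conv l u k - conv l t k) * (W k r - W k s))) => k.
  apply: within_continuousM; first exact: within_continuous_cst.
  exact: within_continuous_increment.
have GB r : s <= r <= u -> `|G r| <= B.
  move=> /andP[sr ru].
  apply: (@norm_sum_mul_increment_le (fun k => conv l u k - conv l t k)) => //.
  by rewrite sr (le_trans ru).
have I1 : \int[mu]_(r in `]t, u]) (kernel l u r * G r) <=
    B * (1 - expR (- (l * (u - t)))).
  apply: (Rintegral_kernel_mul_le (ltW l0) tu).
    by apply: continuous_subspaceW cG; apply: subset_itvr; rewrite bnd_simp.
  by move=> r /andP[tr ru]; apply: GB; rewrite ru (le_trans st) // ltW.
have I2 : \int[mu]_(r in `[s, t]) ((kernel l u r - kernel l t r) * G r) <=
    B * (1 - expR (- (l * (u - t)))).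
  apply: (Rintegral_kernelB_mul_le (ltW l0) st tu).
    by apply: continuous_subspaceW cG; apply: subset_itvl; rewrite bnd_simp.
  by move=> r /andP[sr rt]; apply: GB; rewrite sr (le_trans rt).
apply: le_trans (lerD I1 I2) _.
by rewrite le_eqVlt; apply/orP; left; apply/eqP; ring.
Qed.

Lemma sum_sqr_convB_le l t u N : 0 < l -> s <= t -> t <= u -> u <= 1 ->
  \sum_(k < N) (conv l t k - conv l u k) ^+ 2 <=
  M * (2 * (1 - expR (- (l * (u - t))))) ^+ 2.
Proof.
move=> l0 st tu u1.
under eq_bigr do rewrite -sqrrN opprB.
apply: amgm_self_bound => [||c c0]; last exact: sum_sqr_convB_le_amgm.
  by apply: sumr_ge0 => k _; exact: sqr_ge0.
by rewrite mulr_ge0 // subr_ge0 expR_le1 oppr_le0 mulr_ge0 ?subr_ge0 // ltW.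
Qed.

End convolution_increments.

Section pathwise_bound.
Context {R : realType} {Omega : Type}.
Variables (w : nat -> R -> Omega -> R) (x : Omega) (M : R).
Hypothesis M0 : 0 <= M.
Hypothesis path_holder : forall N r r', 0 <= r <= 1 -> 0 <= r' <= 1 ->
  \sum_(k < N) (w k r x - w k r' x) ^+ 2 <= M * `|r - r'| `^ (2^-1).

Lemma sum_sqr_path_increment_le N r r' : 0 <= r <= 1 -> 0 <= r' <= 1 ->
  \sum_(k < N) (w k r x - w k r' x) ^+ 2 <= M.
Proof.
move=> hr hr'; apply: le_trans (path_holder N r r' hr hr') _.
rewrite -[leRHS]mulr1 ler_wpM2l // powR12_sqrt // -sqrtr1 ler_sqrt //.
by rewrite ler_norml; move: hr hr' => /andP[? ?] /andP[? ?]; apply/andP; split; lra.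
Qed.

Lemma within_continuous_path k : {within `[0, 1], continuous (fun r => w k r x)}.
Proof.
apply: (@within_continuous_sqr_holder _ (fun r => w k r x) M 0 1 M0) => r r' hr hr'.
apply: le_trans (path_holder k.+1 r r' hr hr'); rewrite big_ord_recr /= lerDr.
by apply: sumr_ge0 => i _; exact: sqr_ge0.
Qed.

Lemma sum_sqr_conv_coefB_le (lam : nat -> R) delta gamma j s t u N :
  0 < lam j -> 0 < gamma <= 1 -> 0 <= s -> s <= t -> t <= u -> u <= 1 ->
  \sum_(k < N) (lam j `^ (- delta) *
     (conv_coef lam w x s t j k - conv_coef lam w x s u j k)) ^+ 2 <=
  4 * M * `|t - u| `^ (2 * gamma) * lam j `^ (2 * gamma - 2 * delta).
Proof.
move=> l0 /andP[g0 g1] s0 st tu u1.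
have incr_le N' r : s <= r <= 1 -> \sum_(k < N') (w k r x - w k s x) ^+ 2 <= M.
  by move=> /andP[sr r1]; apply: sum_sqr_path_increment_le; apply/andP; split; lra.
have cW k : {within `[s, 1], continuous (fun r => w k r x)}.
  apply: continuous_subspaceW (within_continuous_path k).
  by apply: subset_itvr; rewrite bnd_simp.
have conv_increment_le := @sum_sqr_convB_le _ (fun k r => w k r x) s M incr_le cW
  (lam j) t u N l0 st tu u1.
under eq_bigr do rewrite exprMn.
rewrite -mulr_sumr sqr_powR //.
apply: le_trans (ler_wpM2l (powR_ge0 _ _) conv_increment_le) _.
set e := expR (- (lam j * (u - t))).
have y0 : 0 <= lam j * (u - t) by rewrite mulr_ge0 ?subr_ge0 // ltW.
have e0 : 0 <= 1 - e by rewrite subr_ge0 /e expR_le1 oppr_le0.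
have e_le : 1 - e <= (lam j * (u - t)) `^ gamma by exact: onemexpR_le_powR.
have lam_dist_powR : ((lam j * (u - t)) `^ gamma) ^+ 2 =
    lam j `^ (2 * gamma) * `|t - u| `^ (2 * gamma).
  rewrite -powR_mulrn ?powR_ge0 // -powRrM (mulrC gamma) powRM ?(ltW l0) ?subr_ge0 //.
  by rewrite distrC ger0_norm // subr_ge0.
have sqr_le : (2 * (1 - e)) ^+ 2 <=
    4 * (lam j `^ (2 * gamma) * `|t - u| `^ (2 * gamma)).
  by rewrite -lam_dist_powR; have := powR_ge0 (lam j * (u - t)) gamma; nra.
apply: (@le_trans _ _ (lam j `^ (2 * - delta) *
    (M * (4 * (lam j `^ (2 * gamma) * `|t - u| `^ (2 * gamma)))))).
  by rewrite ler_wpM2l ?powR_ge0 // ler_wpM2l.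
rewrite (_ : 2 * gamma - 2 * delta = 2 * gamma + 2 * - delta); last by ring.
rewrite powRD; last by apply/implyP => _; rewrite gt_eqF.
by rewrite le_eqVlt; apply/orP; left; apply/eqP; ring.
Qed.

Lemma HS_sq_diff_le (lam : nat -> R) delta gamma S0 s t u :
  (forall i, 0 < lam i) -> 0 < gamma <= 1 ->
  (\sum_(i <oo) (lam i `^ (2 * gamma - 2 * delta))%:E = S0%:E)%E ->
  0 <= s -> s <= t -> t <= u -> u <= 1 ->
  (HS_sq_diff lam delta w x s t u <=
     (4 * M * S0 * `|t - u| `^ (2 * gamma))%:E)%E.
Proof.
move=> lam0 g01 S0E s0 st tu u1; rewrite /HS_sq_diff.
apply: (@le_trans _ _ (\sum_(j <oo)
    ((4 * M * `|t - u| `^ (2 * gamma)) * lam j `^ (2 * gamma - 2 * delta))%:E)%E).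
  apply: lee_nneseries => [j _ _|j _].
    by apply: nneseries_ge0 => k _ _; rewrite lee_fin sqr_ge0.
  apply: nneseries_le_of_sum_le => [k|N]; first by rewrite lee_fin sqr_ge0.
  by rewrite big_mkord sumEFin lee_fin; exact: sum_sqr_conv_coefB_le.
under eq_eseriesr do rewrite EFinM.
rewrite nneseriesZl; last by move=> i _; rewrite lee_fin powR_ge0.
by rewrite S0E -EFinM lee_fin le_eqVlt; apply/orP; left; apply/eqP; ring.
Qed.

End pathwise_bound.

Lemma HS_sq_diffC {R : realType} {Omega : Type} (lam : nat -> R) delta
    (w : nat -> R -> Omega -> R) x s t u :
  HS_sq_diff lam delta w x s t u = HS_sq_diff lam delta w x s u t.
Proof.
apply: eq_eseriesr => j _; apply: eq_eseriesr => k _.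
by rewrite -(sqrrN (_ * _)) -mulrN opprB.
Qed.

Lemma holder_paths_sum_sqr_le {R : realType} {Omega : Type}
    (w : nat -> R -> Omega -> R) x : holder_paths w ->
  exists2 M : R, 0 <= M & forall N r r', 0 <= r <= 1 -> 0 <= r' <= 1 ->
    \sum_(k < N) (w k r x - w k r' x) ^+ 2 <= M * `|r - r'| `^ (2^-1).
Proof.
move=> /(_ x) [_ holder].
have [|C HC] := holder 4^-1.
  by rewrite invr_gt0 ltf_pV2 ?posrE //; lra.
exists (C ^+ 2); first exact: sqr_ge0.
move=> N r r' hr hr'.
have := le_trans (@sum_le_nneseries _ (fun k => (w k r x - w k r' x) ^+ 2) N
  (fun n => sqr_ge0 _)) (HC r r' hr hr').
by rewrite lee_fin (_ : 2 * 4^-1 = 2^-1 :> R) //; field.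
Qed.

Theorem lemma5p2 (R : realType) (lam q : nat -> R) (delta gamma : R)
  (d : measure_display) (Omega : measurableType d) (P : probability Omega R)
  (w : nat -> R -> Omega -> R) :
  (forall i, 0 < lam i) ->
  lam @ \oo --> +oo ->
  0 <= delta <= 1 ->
  (\sum_(i <oo) (lam i `^ (- (2 * delta)))%:E < +oo)%E ->
  (forall i, 0 < q i) ->
  (\sum_(i <oo) (q i)%:E < +oo)%E ->
  QWiener P q w ->
  holder_paths w ->
  2^-1 < gamma ->
  (\sum_(i <oo) (lam i `^ (2 * gamma - 2 * delta))%:E < +oo)%E ->
  {ae P, forall x, exists C : R, forall s t u,
      0 <= s < 1 -> s <= t <= 1 -> s <= u <= 1 ->
      (HS_sq_diff lam delta w x s t u <= (C ^+ 2 * `|t - u| `^ (2 * gamma))%:E)%E}.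
Proof.
move=> lam0 lam_oo /andP[_ d1] _ _ _ _ paths g12 sum_fin.
apply: aeW => x.
have g0 : 0 < gamma by apply: lt_trans g12; rewrite invr_gt0.
have g1 : gamma <= 1.
  rewrite leNgt; apply/negP => g1.
  by apply: (@powR_series_divergent _ lam (2 * gamma - 2 * delta) lam_oo) => //; lra.
have [M M0 path_holder] := holder_paths_sum_sqr_le w x paths.
set S := (\sum_(i <oo) _)%E in sum_fin.
have S0 : (0 <= S)%E by apply: nneseries_ge0 => n _ _; rewrite lee_fin powR_ge0.
have SE : S = (fine S)%:E by rewrite fineK // ge0_fin_numE.
exists (Num.sqrt (4 * M * fine S)) => s t u /andP[s0 _] /andP[st t1] /andP[su u1].
rewrite sqr_sqrtr ?mulr_ge0 ?fine_ge0 //.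
wlog tu : t u st t1 su u1 / t <= u => [Hw|].
  have [|ut] := leP t u; first exact: Hw.
  by rewrite HS_sq_diffC distrC; apply: Hw => //; exact: ltW.
have g01 : 0 < gamma <= 1 by rewrite g0 g1.
exact: (@HS_sq_diff_le _ _ w x M M0 path_holder lam delta gamma _ s t u lam0 g01 SE).
Qed.
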